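(* Let $k,m\in\mathbb{N}$ with $m<k\le 2m$, $k$ even, and $\gcd(2k+1,2(2m+1))=1$; let $a>0$ satisfy $\frac{1}{4km+3k+m+1}\le\frac{a}{2k+1}\le\frac{1}{4km+k+3m+1}$. For $s=0,\dots,4m+1$, $n=0,\dots,2k$ define $X_{sn}=\frac{s}{2(2m+1)}-\frac{n}{2k+1}$ and $\Phi_{sn}(0,0)=\sum_{l\in\mathbb{Z}}Q_2\big(2a(2m+1)(l+X_{sn})\big)$ with $Q_2(x)=(1-|x|)\chi_{[-1,1]}(x)$. Let $A$ be the $2m\times k$ matrix with entries $A_{sn}=\Phi_{sn}(0,0)-\Phi_{s,2k+1-n}(0,0)$, $s=1,\dots,2m$, $n=1,\dots,k$. Then $\operatorname{rank}(A)\le k-1$. *)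

From HB Require Import structures.
From mathcomp Require Import all_boot all_order all_algebra.
From mathcomp Require Import classical_sets fsbigop reals.
Set Implicit Arguments. Unset Strict Implicit. Unset Printing Implicit Defensive.
Import Order.TTheory GRing.Theory Num.Theory.
Local Open Scope ring_scope.
Local Open Scope classical_set_scope.

Definition Q2 {R : realType} (x : R) : R :=
  if `|x| <= 1 then 1 - `|x| else 0.

Definition Xsn {R : realType} (k m s n : nat) : R :=
  s%:R / (2 * (2 * m + 1)%:R) - n%:R / (2 * k + 1)%:R.

(* Phi_{sn}(0,0) = sum_{l in Z} Q_2(2a(2m+1)(l + X_{sn})); the sum has finite
   support (Q2 compactly supported, a > 0), rendered as the fsbigop finite-support sum. *)
Definition Phi00 {R : realType} (a : R) (k m s n : nat) : R :=
  \sum_(l \in [set: int])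
     Q2 (2 * a * (2 * m + 1)%:R * (l%:~R + Xsn k m s n)).

Definition Amat {R : realType} (a : R) (k m : nat) : 'M[R]_(2 * m, k) :=
  \matrix_(i < 2 * m, j < k)
     (Phi00 a k m i.+1 j.+1 - Phi00 a k m i.+1 (2 * k + 1 - j.+1)%N).

From HB Require Import structures.
From mathcomp Require Import all_boot all_order all_algebra.
From mathcomp Require Import classical_sets fsbigop reals.
From mathcomp Require Import ring lra zify.
Set Implicit Arguments. Unset Strict Implicit. Unset Printing Implicit Defensive.
Import Order.TTheory GRing.Theory Num.Theory.
Local Open Scope ring_scope.

(* Since 2a(2m+1) >= 1 and |X_sn| <= 1, Phi_sn(0,0) is a sum of three hat
   functions evaluated at w = 2a(2m+1) X_sn.  The window imposed on a makes
   the sum of these triples at w and at w + a(2m+1) constant as long as w stays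
   (k-m) a/(2k+1) away from the lattice a(2m+1)Z, and for column n this holds
   whenever n 2(2m+1) is at distance at least k-m from (2k+1)Z.  Rows s and
   2m+1-s of A then agree on all such columns.  By coprimality the distances
   for n = 1..k are distinct and positive, so fewer than k-m columns are
   exceptional, and rank A <= m + (k-m-1). *)

Section DistMultiple.
Local Open Scope nat_scope.

Definition dist_multiple (K x : nat) : nat := minn (x %% K) (K - x %% K).

Lemma dist_multiple_le (K x : nat) (t : int) :
  0 < K -> ((dist_multiple K x)%:Z <= `|t * K%:Z - x%:Z|)%R.
Proof.
rewrite /dist_multiple => K_gt0.
have ltr := ltn_pmod x K_gt0.
have x_eq := divn_eq x K; move: (x %/ K) (x %% K) ltr x_eq => q r ltr ->.
have [le_tq | lt_qt] := lerP t q%:Z.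
  have : (t * K%:Z <= q%:Z * K%:Z)%R by rewrite ler_wpM2r.
  lia.
have : ((q%:Z + 1) * K%:Z <= t * K%:Z)%R by rewrite ler_wpM2r //; lia.
lia.
Qed.

Lemma dist_multiple_ler (R : numDomainType) (K x : nat) (u : int) : 0 < K ->
  ((dist_multiple K x)%:R <= `|u%:~R * K%:R - x%:R : R|)%R.
Proof.
move=> K_gt0; have := dist_multiple_le x u K_gt0.
by rewrite -(ler_int R) intr_norm rmorphB rmorphM.
Qed.

Lemma dist_multiple_gt0 (K x : nat) : 0 < K -> ~~ (K %| x) -> 0 < dist_multiple K x.
Proof.
rewrite /dist_multiple /dvdn => K_gt0; have := ltn_pmod x K_gt0.
by move: (x %% K) => r; lia.
Qed.

Lemma dist_multiple_eq (K x y : nat) : 0 < K ->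
  dist_multiple K x = dist_multiple K y -> x = y %[mod K] \/ K %| x + y.
Proof.
rewrite /dist_multiple /dvdn -modnDm => K_gt0.
have := ltn_pmod x K_gt0; have := ltn_pmod y K_gt0.
move: (x %% K) (y %% K) => r s ltr lts.
case: (ltnP (r + s) K) => [lt_rsK | le_Krs].
  by rewrite modn_small //; lia.
have -> : r + s = r + s - K + K by lia.
by rewrite modnDr modn_small; lia.
Qed.

Lemma modn_mul_coprime_inj (K N n1 n2 : nat) : coprime K N ->
  n1 < K -> n2 < K -> n1 * N = n2 * N %[mod K] -> n1 = n2.
Proof.
move=> coKN.
wlog le_n21 : n1 n2 / n2 <= n1 => [hwlog|].
  by case: (leqP n2 n1) => [|/ltnW] le ? ? eq_mod; [|symmetry]; apply: hwlog.
move=> lt_n1K _ /eqP; rewrite eqn_mod_dvd ?leq_mul2r ?le_n21 ?orbT //.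
rewrite -mulnBl Gauss_dvdl //; case: (posnP (n1 - n2)) => [|pos]; first by lia.
by move/dvdn_leq => /(_ pos); lia.
Qed.

Lemma dist_multiple_mul_inj (K N n1 n2 : nat) : coprime K N ->
  0 < n1 -> 0 < n2 -> n1 + n2 < K ->
  dist_multiple K (n1 * N) = dist_multiple K (n2 * N) -> n1 = n2.
Proof.
move=> coKN n1_gt0 n2_gt0 lt_sumK /dist_multiple_eq [||]; first by lia.
  by apply: modn_mul_coprime_inj; lia.
by rewrite -mulnDl Gauss_dvdl // => /dvdn_leq; lia.
Qed.

Lemma card_dist_multiple_lt (K N k d : nat) : coprime K N -> 2 * k < K ->
  #|[set j : 'I_k | dist_multiple K (j.+1 * N) < d]| <= d.-1.
Proof.
move=> coKN lt_2kK; pose f (j : 'I_k) := dist_multiple K (j.+1 * N).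
rewrite cardE -(size_map f) -[d.-1](size_iota 1); apply: uniq_leq_size.
  rewrite map_inj_in_uniq ?enum_uniq // => i j _ _ /dist_multiple_mul_inj eq_ij.
  by apply/val_inj/succn_inj/eq_ij => //; have := ltn_ord i; have := ltn_ord j; lia.
move=> r /mapP [j]; rewrite mem_enum inE => lt_d ->; rewrite mem_iota.
have : 0 < f j.
  apply: dist_multiple_gt0; first by lia.
  by rewrite Gauss_dvdl //; apply/negP => /dvdn_leq; have := ltn_ord j; lia.
rewrite /f in lt_d *; move: (dist_multiple _ _) lt_d => fj; lia.
Qed.

End DistMultiple.

Section RankBounds.
Variable F : fieldType.

Lemma mxrank_supp_col m n (B : 'M[F]_(m, n)) (J : {set 'I_n}) :
  (forall i j, j \notin J -> B i j = 0) -> (\rank B <= #|J|)%N.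
Proof.
move=> B0; rewrite -mxrank_tr.
apply: leq_trans (rank_leq_row (rowsub (@enum_val _ (mem J)) B^T)).
apply/mxrankS/row_subP => j; have [Jj | /B0 Bj0] := boolP (j \in J).
  by rewrite -(enum_rankK_in Jj Jj) -row_rowsub row_sub.
have -> : row j B^T = 0 by apply/rowP => i; rewrite !mxE Bj0.
exact: sub0mx.
Qed.

Lemma mxrank_rev_ord_sym m n (A : 'M[F]_(2 * m, n)) (J : {set 'I_n}) :
  (forall i j, j \notin J -> A i j = A (rev_ord i) j) -> (\rank A <= m + #|J|)%N.
Proof.
move=> Asym.
have fold_lt (i : 'I_(2 * m)) : ((if i < m then val i else val (rev_ord i)) < m)%N.
  by case: ifP => //= /negbT; have := ltn_ord i; lia.
have le_m2m : (m <= 2 * m)%N by lia.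
pose fold (i : 'I_(2 * m)) := if (i < m)%N then i else rev_ord i.
pose A1 := rowsub fold A.
have A1_rank : (\rank A1 <= m)%N.
  have fold_factor : fold =1 widen_ord le_m2m \o (fun i => Ordinal (fold_lt i)).
    by move=> i; apply: val_inj; rewrite /fold /=; case: ifP.
  exact: leq_trans (mxrankS (submx_rowsub _ fold_factor)) (rank_leq_row _).
have A2_rank : (\rank (A - A1)%R <= #|J|)%N.
  apply: mxrank_supp_col => i j /Asym Aij.
  by rewrite !mxE /fold; case: ifP => _; rewrite -?Aij subrr.
have -> : A = (A - A1) + A1 by rewrite subrK.
by apply: leq_trans (mxrank_add _ _) _; rewrite addnC leq_add.
Qed.
End RankBounds.

Section Hat.
Variable R : realType.
Local Open Scope classical_set_scope.
Implicit Types (b c ep t u w : R).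

Lemma Q2N t : Q2 (- t) = Q2 t.
Proof. by rewrite /Q2 normrN. Qed.

Lemma Q2_eq0 t : 1 <= `|t| -> Q2 t = 0.
Proof.
rewrite /Q2 le_eqVlt => /predU1P [<- | lt1]; first by rewrite lexx subrr.
by rewrite leNgt lt1.
Qed.

Lemma Q2_le_N1 t : t <= -1 -> Q2 t = 0.
Proof. by move=> le_tN1; apply: Q2_eq0; rewrite ler0_norm; lra. Qed.

Lemma Q2_ge1 t : 1 <= t -> Q2 t = 0.
Proof. by move=> ge_t1; apply: Q2_eq0; rewrite ger0_norm; lra. Qed.

Lemma Q2_nonpos t : -1 <= t -> t <= 0 -> Q2 t = 1 + t.
Proof. by move=> ? ?; rewrite /Q2 ler0_norm ?ifT; lra. Qed.

Lemma Q2_nonneg t : 0 <= t -> t <= 1 -> Q2 t = 1 - t.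
Proof. by move=> ? ?; rewrite /Q2 ger0_norm ?ifT; lra. Qed.

Definition Q2sum3 b u : R := Q2 (u - b) + Q2 u + Q2 (u + b).

Lemma Q2sum3N b u : Q2sum3 b (- u) = Q2sum3 b u.
Proof.
rewrite /Q2sum3 (_ : - u + b = - (u - b)); last by ring.
by rewrite -opprD !Q2N; ring.
Qed.

Lemma fsbig_Q2_lattice b t : 1 <= b -> `|t| <= 1 ->
  \sum_(l \in [set: int]) Q2 (b * (l%:~R + t)) = Q2sum3 b (b * t).
Proof.
move=> ge_b1 le_t1.
rewrite -(fsbig_widen [set` [:: -1; 0; 1]] setT) //; last first.
  move=> l [_ /=]; rewrite !inE => l_far; apply: Q2_eq0.
  have ge_l2 : 2 <= `|l%:~R : R| by rewrite -intr_norm (ler_int R 2); lia.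
  have : 1 <= `|l%:~R + t| by have := ler_normB (l%:~R + t) t; rewrite addrK; lra.
  by rewrite normrM ger0_norm; nra.
rewrite -fsbig_seq // !big_cons big_nil /Q2sum3 /= addr0 addrA.
by congr (_ + _ + _); congr Q2; rewrite ?mulrN1 /=; ring.
Qed.

(* On each window between consecutive points of cZ exactly one hat of each
   triple is nonzero, one rising and one falling, so the slopes cancel. *)
Lemma Q2sum3_half_shift c ep w : 0 < c -> `|c - 1| <= ep ->
  -(2 * c) <= w -> w <= c -> (forall t : int, ep <= `|w - t%:~R * c|) ->
  Q2sum3 (2 * c) w + Q2sum3 (2 * c) (w + c) = 2 - c.
Proof.
move=> c_gt0 /ler_normlP [ep_lo ep_hi] w_lo w_hi far.
have far_at (t : int) : w <= t%:~R * c - ep \/ t%:~R * c + ep <= w.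
  have := far t; case: (lerP 0 (w - t%:~R * c)) => [/ger0_norm | /ltr0_norm] -> far_t.
    by right; lra.
  by left; lra.
have := far_at 1; have := far_at 0; have := far_at (-1); have := far_at (-2).
move=> /= fN2 fN1 f0 f1; rewrite ?mulNr ?mul1r ?mul0r in fN2 fN1 f0 f1.
have [[lo hi]|[[lo hi]|[lo hi]]] : (- (2 * c) + ep <= w /\ w <= - c - ep) \/
  (- c + ep <= w /\ w <= - ep) \/ (ep <= w /\ w <= c - ep) by lra.
- rewrite /Q2sum3 (Q2_le_N1 (t := w - 2 * c)) ?(Q2_le_N1 (t := w))
    ?(Q2_nonneg (t := w + 2 * c)) ?(Q2_le_N1 (t := w + c - 2 * c))
    ?(Q2_nonpos (t := w + c)) ?(Q2_ge1 (t := w + c + 2 * c)); lra.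
- rewrite /Q2sum3 (Q2_le_N1 (t := w - 2 * c)) ?(Q2_nonpos (t := w))
    ?(Q2_ge1 (t := w + 2 * c)) ?(Q2_le_N1 (t := w + c - 2 * c))
    ?(Q2_nonneg (t := w + c)) ?(Q2_ge1 (t := w + c + 2 * c)); lra.
- rewrite /Q2sum3 (Q2_le_N1 (t := w - 2 * c)) ?(Q2_nonneg (t := w))
    ?(Q2_ge1 (t := w + 2 * c)) ?(Q2_nonpos (t := w + c - 2 * c))
    ?(Q2_ge1 (t := w + c)) ?(Q2_ge1 (t := w + c + 2 * c)); lra.
Qed.

End Hat.

Lemma natr_double_add1_neq0 (R : numDomainType) (n : nat) : 2 * n%:R + 1 != 0 :> R.
Proof. by rewrite gt_eqF // ltr_wpDl ?mulr_ge0. Qed.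

Section Phase.
Variables (R : realType) (a : R) (k m : nat).
Local Notation K := ((2 * k + 1)%:R : R).
Local Notation M := ((2 * m + 1)%:R : R).

(* [phase s n] is 2a(2m+1) X_sn over a common denominator; [s] is an integer
   so that shifts by the half period a(2m+1) stay phases (phase_shift). *)
Definition phase (s : int) (n : nat) : R := a / K * (s%:~R * K - n%:R * (2 * M)).

Let K_gt0 : 0 < K. Proof. by rewrite ltr0n addn1. Qed.
Let M_gt0 : 0 < M. Proof. by rewrite ltr0n addn1. Qed.

Lemma Phi00_phase (s n : nat) : 1 <= 2 * (a * M) ->
  (s <= 2 * (2 * m + 1))%N -> (n <= 2 * k + 1)%N ->
  Phi00 a k m s n = Q2sum3 (2 * (a * M)) (phase s n).
Proof.
move=> ge_b1 le_sN le_nK.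
have X_le1 : `|Xsn k m s n : R| <= 1.
  have s_le : s%:R / (2 * M) <= 1 by rewrite ler_pdivrMr ?mulr_gt0 // mul1r -natrM ler_nat.
  have n_le : n%:R / K <= 1 by rewrite ler_pdivrMr // mul1r ler_nat.
  have s_ge : 0 <= s%:R / (2 * M) by rewrite divr_ge0 ?mulr_ge0 // ltW.
  have n_ge : 0 <= n%:R / K by rewrite divr_ge0 // ltW.
  by rewrite /Xsn ler_norml; lra.
rewrite /Phi00 fsbig_Q2_lattice -?mulrA //; congr Q2sum3.
by rewrite /phase /Xsn; field; rewrite !natr_double_add1_neq0.
Qed.

Lemma phase_shift (s : int) n (t : int) :
  phase s n - t%:~R * (a * M) = phase (s - t * (2 * m + 1)%:Z) n.
Proof. by rewrite /phase rmorphB rmorphM /=; field; rewrite natr_double_add1_neq0. Qed.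

Lemma phase_compl (s : int) n : (n <= 2 * k + 1)%N ->
  phase s (2 * k + 1 - n) = - phase ((2 * (2 * m + 1))%:Z - s) n.
Proof.
by move=> le_nK; rewrite /phase natrB // rmorphB /=; field; rewrite natr_double_add1_neq0.
Qed.

Lemma phase_bounds (s n : nat) : 0 < a ->
  (s <= 2 * m + 1)%N -> (n <= 2 * k + 1)%N ->
  - (2 * (a * M)) <= phase s n /\ phase s n <= a * M.
Proof.
move=> a_gt0 le_sM le_nK.
have aK_gt0 : 0 < a / K by rewrite divr_gt0.
have -> : - (2 * (a * M)) = a / K * (- (2 * K * M)) by field; rewrite natr_double_add1_neq0.
have -> : a * M = a / K * (K * M) by field; rewrite natr_double_add1_neq0.
rewrite /phase !ler_pM2l //.
have : s%:R <= M by rewrite ler_nat.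
have : n%:R <= K by rewrite ler_nat.
have := ler0n R s; have := ler0n R n; split; nra.
Qed.

Lemma phase_far (s : int) n (d : R) : 0 < a ->
  (forall u : int, d <= `|u%:~R * K - n%:R * (2 * M)|) -> a / K * d <= `|phase s n|.
Proof.
by move=> a_gt0 far; rewrite /phase normrM gtr0_norm ?divr_gt0 // ler_pM2l ?divr_gt0.
Qed.

Lemma Phi00_diff_reflect (s s' n : nat) (d : R) : 0 < a -> 1 <= 2 * (a * M) ->
  `|a * M - 1| <= a / K * d ->
  (forall u : int, d <= `|u%:~R * K - n%:R * (2 * M)|) ->
  (s + s' = 2 * m + 1)%N -> (n <= 2 * k + 1)%N ->
  Phi00 a k m s n - Phi00 a k m s (2 * k + 1 - n) =
  Phi00 a k m s' n - Phi00 a k m s' (2 * k + 1 - n).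
Proof.
move=> a_gt0 ge_b1 ep_ge far sum_ss' le_nK.
have le_nK' : (2 * k + 1 - n <= 2 * k + 1)%N by lia.
have le_sM : (s <= 2 * m + 1)%N by lia.
rewrite !Phi00_phase //; try lia.
have reflect_s (n' : nat) : (n' <= 2 * k + 1)%N ->
    phase s' n' = - (phase s (2 * k + 1 - n') + a * M).
  move=> le_n'K; rewrite phase_compl // opprD opprK.
  have := phase_shift ((2 * (2 * m + 1))%:Z - s%:Z) n' 1; rewrite rmorph1 !mul1r => ->.
  congr phase; lia.
rewrite (reflect_s _ le_nK) (reflect_s _ le_nK') subKn // !Q2sum3N.
have far_w1 (t : int) : a / K * d <= `|phase s n - t%:~R * (a * M)|.
  by rewrite phase_shift phase_far.
have far_w2 (t : int) : a / K * d <= `|phase s (2 * k + 1 - n) - t%:~R * (a * M)|.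
  rewrite phase_compl // (_ : - _ - _ = - (phase ((2 * (2 * m + 1))%:Z - s%:Z) n -
    (- t)%:~R * (a * M))); last by rewrite intrN; ring.
  by rewrite normrN phase_shift phase_far.
have aM_gt0 : 0 < a * M by rewrite mulr_gt0.
have [lo1 hi1] := phase_bounds a_gt0 le_sM le_nK.
have [lo2 hi2] := phase_bounds a_gt0 le_sM le_nK'.
have := Q2sum3_half_shift aM_gt0 ep_ge lo1 hi1 far_w1.
have := Q2sum3_half_shift aM_gt0 ep_ge lo2 hi2 far_w2.
lra.
Qed.

End Phase.

Lemma scale_window (R : realType) (k m : nat) (a : R) : 0 < a -> (m < k)%N ->
  1 / (4 * k * m + 3 * k + m + 1)%:R <= a / (2 * k + 1)%:R ->
  a / (2 * k + 1)%:R <= 1 / (4 * k * m + k + 3 * m + 1)%:R ->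
  1 <= 2 * (a * (2 * m + 1)%:R) /\
  `|a * (2 * m + 1)%:R - 1| <= a / (2 * k + 1)%:R * (k - m)%:R.
Proof.
move=> a_gt0 lt_mk lo hi.
have K_gt0 : 0 < (2 * k + 1)%:R :> R by rewrite ltr0n addn1.
have aKM : a / (2 * k + 1)%:R * ((2 * k + 1)%:R * (2 * m + 1)%:R) = a * (2 * m + 1)%:R.
  by field; rewrite natr_double_add1_neq0.
have lo_eq : (4 * k * m + 3 * k + m + 1)%:R =
    (2 * k + 1)%:R * (2 * m + 1)%:R + (k - m)%:R :> R.
  by rewrite -natrM -natrD; congr _%:R; lia.
have hi_eq : (4 * k * m + k + 3 * m + 1)%:R =
    (2 * k + 1)%:R * (2 * m + 1)%:R - (k - m)%:R :> R.
  by apply/eqP; rewrite eq_sym subr_eq -natrM -natrD; apply/eqP; congr _%:R; lia.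
have ep_le : a / (2 * k + 1)%:R * (k - m)%:R <= a * (2 * m + 1)%:R.
  by rewrite -aKM ler_pM2l ?divr_gt0 // -natrM ler_nat; lia.
move: lo hi; rewrite ler_pdivrMr ?ler_pdivlMr ?ltr0n; try lia.
rewrite lo_eq hi_eq mulrDr mulrBr aKM => lo hi.
by split; [lra | rewrite ler_norml; apply/andP; split; lra].
Qed.

Theorem lemma3p14 (R : realType) (k m : nat) (a : R)
  (hmk : (m < k)%N) (hkm : (k <= 2 * m)%N) (hkeven : ~~ odd k)
  (hgcd : gcdn (2 * k + 1) (2 * (2 * m + 1)) = 1%N)
  (ha : 0 < a)
  (hlo : 1 / (4 * k * m + 3 * k + m + 1)%:R <= a / (2 * k + 1)%:R)
  (hhi : a / (2 * k + 1)%:R <= 1 / (4 * k * m + k + 3 * m + 1)%:R) :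
  (\rank (Amat a k m) <= k.-1)%N.
Proof.
have coKN : coprime (2 * k + 1) (2 * (2 * m + 1)) by rewrite /coprime hgcd.
have K_gt0 : (0 < 2 * k + 1)%N by lia.
have [width_ge1 window] := scale_window ha hmk hlo hhi.
pose J := [set j : 'I_k | (dist_multiple (2 * k + 1) (j.+1 * (2 * (2 * m + 1))) < k - m)%N].
have card_J : (#|J| <= (k - m).-1)%N by apply: card_dist_multiple_lt; lia.
suff rows_sym i j : j \notin J -> Amat a k m i j = Amat a k m (rev_ord i) j.
  by move: (mxrank_rev_ord_sym rows_sym) card_J; move: #|J| => c; lia.
rewrite inE -leqNgt => far_j; rewrite !mxE.
apply: (Phi00_diff_reflect ha width_ge1 window).
- move=> u; rewrite -!natrM.
  by apply: le_trans _ (dist_multiple_ler R _ u K_gt0); rewrite ler_nat.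
- by rewrite /=; have := ltn_ord i; lia.
- by have := ltn_ord j; lia.
Qed.
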